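(* Let $m$ range over even integers tending to infinity, with $N=N(m)$, $n=n(m)$ positive integers satisfying $N=o(m)$ and $n=o(m)$, and fix $0<\varepsilon\le1$. Then, uniformly over $\omega\in K_m$, $$\log\Pr_{(u,q^\omega,u)}(A)=-\Big(1+\tfrac12\varepsilon^2\Big)\frac{N^2}{m}\,(1+o(1))+O(1),$$ where $A$ is the event that no symbol appears more than once in $X$ and no symbol appears more than once in $Y$.
   Context: Let $u$ be the uniform distribution on $[m]=\{1,\dots,m\}$. Let $K_m$ be the collection of all subsets of $[m]$ of cardinality $m/2$. For $\omega\in K_m$ let $q^\omega$ be the distribution on $[m]$ with $q^\omega_j=(1+\varepsilon)/m$ for $j\in\omega$ and $q^\omega_j=(1-\varepsilon)/m$ for $j\notin\omega$. $\Pr_{(u,q^\omega,u)}$ denotes the probability when $X=(X_1,\dots,X_N)$ is i.i.d. uniform on $[m]$, $Y=(Y_1,\dots,Y_N)$ is i.i.d. with marginal $q^\omega$, $Z=(Z_1,\dots,Z_n)$ is i.i.d. uniform on $[m]$, and $X,Y,Z$ are independent. *)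

From HB Require Import structures.
From mathcomp Require Import all_boot all_order all_algebra.
From mathcomp Require Import reals exp.
Set Implicit Arguments. Unset Strict Implicit. Unset Printing Implicit Defensive.
Import Order.TTheory GRing.Theory Num.Theory.
Local Open Scope ring_scope.

Section Defs.
Variable R : realType.

Definition unifp (m : nat) (j : 'I_m) : R := 1 / m%:R.

Definition qom (eps : R) (m : nat) (omega : {set 'I_m}) (j : 'I_m) : R :=
  if j \in omega then (1 + eps) / m%:R else (1 - eps) / m%:R.

Definition eventA (N m : nat) (x y : {ffun 'I_N -> 'I_m}) : bool :=
  injectiveb x && injectiveb y.

(* Pr_{(u,q^omega,u)}(A): X ~ u^N, Y ~ (q^omega)^N, Z ~ u^n, independent *)
Definition probA (eps : R) (m : nat) (omega : {set 'I_m}) (N n : nat) : R :=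
  \sum_(w : {ffun 'I_N -> 'I_m} * {ffun 'I_N -> 'I_m} * {ffun 'I_n -> 'I_m}
         | eventA w.1.1 w.1.2)
    ((\prod_(i < N) unifp (w.1.1 i)) * (\prod_(i < N) qom eps omega (w.1.2 i))
      * (\prod_(k < n) unifp (w.2 k))).
End Defs.

From HB Require Import structures.
From mathcomp Require Import all_boot all_order all_algebra.
From mathcomp Require Import reals exp.
From mathcomp Require Import sequences ring lra zify.
Import Order.TTheory GRing.Theory Num.Theory.
Local Open Scope ring_scope.
Set Implicit Arguments. Unset Strict Implicit. Unset Printing Implicit Defensive.

(* Integrating out Z and using the independence of X and Y, Pr(A) is the product of the
   probabilities that X and that Y are injective.  For q^omega, which has mass (1 + e)/m and
   (1 - e)/m on the two halves of [m], conditioning on the number K of coordinates of Y that fall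
   in omega gives
     Pr(Y injective) = E[(h)_K / h^K * (h)_(N-K) / h^(N-K)],   K ~ Bin(N, (1+e)/2),  h = m/2.
   As (h)_k / h^k = exp(-k^2/(2h) + O(k/h + k^3/h^2)), the upper bound follows from the
   generating function of K once the exponent is linearised at the mean of K, and the lower bound
   from Jensen's inequality and the first two moments of K: both give
     ln Pr(Y injective) = -(1 + e^2) N^2/(2m) + O(N/m + N^3/m^2).
   The case e = 0 accounts for X, and the two exponents add up to (1 + e^2/2) N^2/m. *)

Section InjectiveMass.
Variable R : realType.

Definition inj_mass (m N : nat) (q : 'I_m -> R) : R :=
  \sum_(y : {ffun 'I_N -> 'I_m} | injectiveb y) \prod_(i < N) q (y i).

Lemma eq_inj_mass m N (q1 q2 : 'I_m -> R) : q1 =1 q2 -> inj_mass N q1 = inj_mass N q2.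
Proof. by move=> eq_q; apply: eq_bigr => y _; apply: eq_bigr => i _; rewrite eq_q. Qed.

Lemma sum_ffun_prod m n (q : 'I_m -> R) :
  \sum_(z : {ffun 'I_n -> 'I_m}) \prod_(k < n) q (z k) = (\sum_j q j) ^+ n.
Proof.
by rewrite -(bigA_distr_bigA (fun (k : 'I_n) j => q j)) prodr_const card_ord.
Qed.

Lemma sum_unifp m : (0 < m)%N -> \sum_(j < m) unifp R j = 1.
Proof.
move=> m_gt0; rewrite sumr_const card_ord /unifp -mulr_natr.
by field; rewrite pnatr_eq0 -lt0n.
Qed.

Lemma probA_inj_mass eps m (omega : {set 'I_m}) N n : (0 < m)%N ->
  probA eps omega N n = inj_mass N (@unifp R m) * inj_mass N (qom eps omega).
Proof.
move=> m_gt0; rewrite /probA (eq_bigl (fun w => eventA w.1.1 w.1.2 && true)); last first.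
  by move=> w; rewrite andbT.
rewrite -(pair_big (fun xy => eventA xy.1 xy.2) xpredT
  (fun (xy : {ffun 'I_N -> 'I_m} * {ffun 'I_N -> 'I_m}) (z : {ffun 'I_n -> 'I_m}) =>
  \prod_(i < N) unifp R (xy.1 i) * \prod_(i < N) qom eps omega (xy.2 i)
    * \prod_(k < n) unifp R (z k))) /=.
under eq_bigr do rewrite -mulr_sumr sum_ffun_prod sum_unifp // expr1n mulr1.
rewrite /inj_mass big_distrl /=; under [RHS]eq_bigr do rewrite mulr_sumr.
by rewrite pair_big.
Qed.

Section Cons.
Variables (T : finType) (N : nat).

Definition ffun_cons (p : T * {ffun 'I_N -> T}) : {ffun 'I_N.+1 -> T} :=
  [ffun i => if unlift ord0 i is Some k then p.2 k else p.1].

Lemma ffun_cons0 j f : ffun_cons (j, f) ord0 = j.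
Proof. by rewrite ffunE unlift_none. Qed.

Lemma ffun_consS j f i : ffun_cons (j, f) (lift ord0 i) = f i.
Proof. by rewrite ffunE liftK. Qed.

Lemma ffun_cons_bij : bijective ffun_cons.
Proof.
exists (fun F : {ffun 'I_N.+1 -> T} => (F ord0, [ffun k : 'I_N => F (lift ord0 k)])).
  by move=> [j f]; rewrite ffun_cons0; congr (_, _); apply/ffunP => i; rewrite ffunE ffun_consS.
move=> F; apply/ffunP => i; rewrite ffunE /=.
by case: (unliftP ord0 i) => [k ->|->]; rewrite ?ffunE.
Qed.

Lemma injectiveb_ffun_cons j f :
  injectiveb (ffun_cons (j, f)) = (j \notin codom f) && injectiveb f.
Proof.
change (uniq (codom (ffun_cons (j, f))) = (j \notin codom f) && uniq (codom f)).
suff -> : codom (ffun_cons (j, f)) = j :: codom f by [].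
rewrite /codom /image_mem enum_ordSl /= ffun_cons0 -map_comp.
by congr (_ :: _); apply: eq_map => i /=; rewrite ffun_consS.
Qed.

End Cons.

Definition zero_at m (q : 'I_m -> R) (j : 'I_m) (i : 'I_m) : R :=
  if i == j then 0 else q i.

Lemma inj_mass0 m (q : 'I_m -> R) : inj_mass 0 q = 1.
Proof.
rewrite /inj_mass (eq_bigl xpredT); last by move=> y; apply/injectiveP => -[].
rewrite (eq_bigr (fun _ => 1)) => [|y _]; last by rewrite big_ord0.
by rewrite sumr_const card_ffun !card_ord expn0.
Qed.

Lemma inj_massS m N (q : 'I_m -> R) :
  inj_mass N.+1 q = \sum_j q j * inj_mass N (zero_at q j).
Proof.
rewrite /inj_mass (reindex (@ffun_cons _ N)) /=; last exact/onW_bij/ffun_cons_bij.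
under [RHS]eq_bigr do rewrite mulr_sumr big_mkcond.
rewrite big_mkcond pair_big /=; apply: eq_bigr => -[j f] _ /=.
rewrite injectiveb_ffun_cons big_ord_recl ffun_cons0.
have -> : \prod_(i < N) q (ffun_cons (j, f) (lift ord0 i)) = \prod_(i < N) q (f i).
  by apply: eq_bigr => i _; rewrite ffun_consS.
have [/codomP[i ->]|j_notin_f] /= := boolP (j \in codom f).
  by case: ifP; rewrite // (bigD1 i) //= /zero_at eqxx mul0r mulr0.
case: ifP => // _; congr (_ * _); apply: eq_bigr => i _.
rewrite /zero_at; case: eqP => // fi_j.
by case/negP: j_notin_f; rewrite -fi_j codom_f.
Qed.

End InjectiveMass.

Section TwoLevelMass.
Variable R : realType.

Definition two_level_mass (a b : R) (N s t : nat) : R :=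
  \sum_(k < N.+1) (a ^+ k * (s ^_ k)%:R) * (b ^+ (N - k) * (t ^_ (N - k))%:R) *+ 'C(N, k).

Lemma two_level_mass0 a b s t : two_level_mass a b 0 s t = 1.
Proof. by rewrite /two_level_mass big_ord1 !expr0 !ffactn0 !mul1r. Qed.

Lemma sum_binS (A B : nat -> R) N :
  \sum_(k < N.+2) A k * B (N.+1 - k)%N *+ 'C(N.+1, k) =
  \sum_(k < N.+1) A k.+1 * B (N - k)%N *+ 'C(N, k) +
  \sum_(k < N.+1) A k * B (N.+1 - k)%N *+ 'C(N, k).
Proof.
rewrite big_ord_recl [X in _ = _ + X]big_ord_recl /=.
under eq_bigr do rewrite /bump leq0n add1n binS mulrnDr subSS.
rewrite big_split /= [X in _ + X = _]addrC [LHS]addrCA !bin0; congr (_ + (_ + _)).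
rewrite big_ord_recr /= bin_small // mulr0n addr0.
by apply: eq_bigr => i _; rewrite /bump leq0n add1n.
Qed.

Lemma natr_mul_ffact_pred (x : R) s k :
  s%:R * x * (x ^+ k * (s.-1 ^_ k)%:R) = x ^+ k.+1 * (s ^_ k.+1)%:R.
Proof.
case: s => [|s] /=; first by rewrite !mul0r ffact0n mulr0.
by rewrite ffactSS natrM exprS; ring.
Qed.

Lemma two_level_massS a b N s t :
  two_level_mass a b N.+1 s t =
  s%:R * a * two_level_mass a b N s.-1 t + t%:R * b * two_level_mass a b N s t.-1.
Proof.
rewrite /two_level_mass (sum_binS (fun k => a ^+ k * (s ^_ k)%:R)
  (fun l => b ^+ l * (t ^_ l)%:R)) !mulr_sumr.
congr (_ + _); apply: eq_bigr => k _.
  by rewrite [RHS]mulrnAr [in RHS]mulrA natr_mul_ffact_pred.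
have le_kN : (k <= N)%N by rewrite -ltnS.
by rewrite [RHS]mulrnAr subSn // -natr_mul_ffact_pred; congr (_ *+ _); ring.
Qed.

Lemma inj_mass_two_level m (a b : R) N (S T : {set 'I_m}) (q : 'I_m -> R) :
  [disjoint S & T] ->
  (forall j, q j = if j \in S then a else if j \in T then b else 0) ->
  inj_mass N q = two_level_mass a b N #|S| #|T|.
Proof.
elim: N S T q => [|N IH] S T q disjST qE; first by rewrite inj_mass0 two_level_mass0.
have step j : q j * inj_mass N (zero_at q j) =
    (if j \in S then a * two_level_mass a b N #|S|.-1 #|T| else 0) +
    (if j \in T then b * two_level_mass a b N #|S| #|T|.-1 else 0).
  have [jS|jNS] := boolP (j \in S).
    have jNT : j \notin T by rewrite (disjointFr disjST jS).
    rewrite (negbTE jNT) addr0 qE jS (cardsD1 j S) jS (IH (S :\ j) T) //.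
      exact: disjointWl (subD1set S j) disjST.
    move=> i; rewrite /zero_at qE in_setD1; case: (i =P j) => [->|] //=.
    by rewrite (negbTE jNT).
  have [jT|jNT] := boolP (j \in T); last by rewrite qE (negbTE jNS) (negbTE jNT) mul0r addr0.
  rewrite add0r qE (negbTE jNS) jT (cardsD1 j T) jT (IH S (T :\ j)) //.
    exact: disjointWr (subD1set T j) disjST.
  move=> i; rewrite /zero_at qE in_setD1; case: (i =P j) => [->|] //=.
  by rewrite (negbTE jNS).
rewrite inj_massS two_level_massS (eq_bigr _ (fun j _ => step j)) big_split /=.
by rewrite -!big_mkcond /= !sumr_const -!mulrA !mulr_natl.
Qed.

End TwoLevelMass.

Section FallingFactorialRatio.
Variable R : realType.

Definition ffact_ratio (h k : nat) : R := (h ^_ k)%:R / h%:R ^+ k.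

Lemma ffact_ratio_ge0 h k : 0 <= ffact_ratio h k.
Proof. by rewrite /ffact_ratio divr_ge0 // exprn_ge0. Qed.

Lemma ffact_ratioS h k : (0 < h)%N ->
  ffact_ratio h k.+1 = ffact_ratio h k * (1 - k%:R / h%:R).
Proof.
move=> h_gt0; have h_neq0 : (h%:R : R) != 0 by rewrite pnatr_eq0 -lt0n.
rewrite /ffact_ratio ffactnSr natrM exprSr.
have [le_kh|lt_hk] := leqP k h.
  by rewrite natrB //; field; rewrite h_neq0 expf_neq0.
by rewrite ffact_small // !mul0r.
Qed.

Lemma ffact_ratio_le_expR h k : (0 < h)%N ->
  ffact_ratio h k <= expR (- (k%:R * (k%:R - 1)) / (2 * h%:R)).
Proof.
move=> h_gt0; have h_pos : (0 : R) < h%:R by rewrite ltr0n.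
elim: k => [|k IH].
  by rewrite /ffact_ratio expr0 ffactn0 divr1 mul0r oppr0 mul0r expR0.
have -> : - (k.+1%:R * (k.+1%:R - 1)) / (2 * h%:R) =
    - (k%:R * (k%:R - 1)) / (2 * h%:R) + - (k%:R / h%:R) :> R.
  by rewrite -natr1; field; rewrite gt_eqF.
rewrite ffact_ratioS // expRD.
have [le_kh|lt_hk] := leqP k h.
  by rewrite ler_pM ?ffact_ratio_ge0 ?expR_ge1Dx // subr_ge0 ler_pdivrMr ?mul1r ?ler_nat.
apply: le_trans (mulr_ge0 (expR_ge0 _) (expR_ge0 _)).
rewrite mulr_ge0_le0 ?ffact_ratio_ge0 // subr_le0 ler_pdivlMr // mul1r ler_nat ltnW //.
Qed.

Lemma expR_le_1Bx (x : R) : 0 <= x <= 1 / 2 -> expR (- (x + 2 * x ^+ 2)) <= 1 - x.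
Proof.
case/andP=> x_ge0 x_le; rewrite expRN -div1r ler_pdivrMr ?expR_gt0 //.
apply: (le_trans _ (ler_wpM2l _ (expR_ge1Dx _))); last by lra.
nra.
Qed.

Lemma ffact_ratio_ge_expR h k : (k.*2 <= h)%N ->
  expR (- (k%:R ^+ 2 / (2 * h%:R) + k%:R ^+ 3 / h%:R ^+ 2)) <= ffact_ratio h k.
Proof.
elim: k => [|k IH] le_2k_h.
  by rewrite /ffact_ratio expr0 ffactn0 divr1 expr0n /= mul0r add0r expr0n mul0r oppr0 expR0.
have h_gt0 : (0 < h)%N by lia.
have h_pos : (0 : R) < h%:R by rewrite ltr0n.
have kh_bounds : 0 <= (k%:R / h%:R : R) <= 1 / 2.
  apply/andP; split; first by rewrite divr_ge0 // ltW.
  rewrite ler_pdivrMr //.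
  have : (k.*2%:R : R) <= h%:R by rewrite ler_nat; lia.
  by rewrite -mul2n natrM; lra.
rewrite ffact_ratioS //.
apply: le_trans (ler_pM (expR_ge0 _) (expR_ge0 _) (IH _) (expR_le_1Bx kh_bounds)); last by lia.
rewrite -expRD ler_expR -natr1 -subr_ge0.
set K := k%:R; set H := h%:R.
have K_ge0 : 0 <= K by rewrite /K ler0n.
have -> : - (K ^+ 2 / (2 * H) + K ^+ 3 / H ^+ 2) - (K / H + 2 * (K / H) ^+ 2) -
    - ((K + 1) ^+ 2 / (2 * H) + (K + 1) ^+ 3 / H ^+ 2) =
    (1 / 2) / H + (K ^+ 2 + 3 * K + 1) / H ^+ 2.
  by field; rewrite gt_eqF.
by rewrite addr_ge0 // divr_ge0 ?exprn_ge0 ?ltW //; nra.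
Qed.

End FallingFactorialRatio.

Section Binomial.
Variable R : realType.
Implicit Types p r : R.

Definition binomial_pmf p (N k : nat) : R := (1 - p) ^+ (N - k) * p ^+ k *+ 'C(N, k).

Lemma binomial_pmf_ge0 p N k : 0 <= p <= 1 -> 0 <= binomial_pmf p N k.
Proof.
by case/andP=> p_ge0 p_le1; rewrite mulrn_wge0 // mulr_ge0 ?exprn_ge0 // subr_ge0.
Qed.

Lemma binomial_pgf p r N :
  \sum_(k < N.+1) binomial_pmf p N k * r ^+ k = (1 - p + p * r) ^+ N.
Proof.
rewrite exprDn; apply: eq_bigr => k _.
rewrite /binomial_pmf -[in LHS](mulr_natr _ 'C(N, k)) -[in RHS](mulr_natr _ 'C(N, k)).
by rewrite exprMn; ring.
Qed.

Lemma sum_binomial_pmf p N : \sum_(k < N.+1) binomial_pmf p N k = 1.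
Proof.
have := binomial_pgf p 1 N; rewrite mulr1 subrK expr1n => <-.
by apply: eq_bigr => k _; rewrite expr1n mulr1.
Qed.

Lemma sum_binomial_pmf_index_shift p N (f : nat -> R) :
  \sum_(k < N.+2) binomial_pmf p N.+1 k * (k%:R * f k.-1) =
  N.+1%:R * p * \sum_(k < N.+1) binomial_pmf p N k * f k.
Proof.
rewrite big_ord_recl /= mul0r mulr0 add0r mulr_sumr.
apply: eq_bigr => i _; rewrite /binomial_pmf /bump leq0n add1n subSS /=.
have bin_id : ('C(N.+1, i.+1)%:R * i.+1%:R = N.+1%:R * 'C(N, i)%:R :> R).
  by rewrite -!natrM mulnC -mul_bin_diag.
rewrite -(mulr_natr _ 'C(N.+1, i.+1)) -(mulr_natr _ 'C(N, i)) exprS.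
transitivity ((1 - p) ^+ (N - i) * p ^+ i * p * ('C(N.+1, i.+1)%:R * i.+1%:R) * f i).
  by ring.
by rewrite bin_id; ring.
Qed.

Lemma binomial_mean p N : \sum_(k < N.+1) binomial_pmf p N k * k%:R = N%:R * p.
Proof.
case: N => [|N]; first by rewrite big_ord1 !mulr0 mul0r.
transitivity (\sum_(k < N.+2) binomial_pmf p N.+1 k * (k%:R * 1)).
  by apply: eq_bigr => k _; rewrite mulr1.
rewrite (sum_binomial_pmf_index_shift p N (fun _ => 1)).
by rewrite (eq_bigr _ (fun k _ => mulr1 _)) sum_binomial_pmf mulr1.
Qed.

Lemma binomial_factorial_moment2 p N :
  \sum_(k < N.+1) binomial_pmf p N k * (k%:R * (k.-1)%:R) = N%:R * (N.-1)%:R * p ^+ 2.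
Proof.
case: N => [|N]; first by rewrite big_ord1 !mul0r mulr0.
by rewrite (sum_binomial_pmf_index_shift p N (fun j => j%:R)) binomial_mean /=; ring.
Qed.

Lemma expR_jensen (I : finType) (w phi : I -> R) :
  (forall i, 0 <= w i) -> \sum_i w i = 1 ->
  expR (- \sum_i w i * phi i) <= \sum_i w i * expR (- phi i).
Proof.
move=> w_ge0 w_sum1; set mu := \sum_i w i * phi i.
have tangent i : w i * (expR (- mu) * (1 - phi i + mu)) <= w i * expR (- phi i).
  rewrite ler_wpM2l //.
  have -> : expR (- phi i) = expR (- mu) * expR (mu - phi i).
    by rewrite -expRD; congr expR; ring.
  rewrite ler_wpM2l ?expR_ge0 //; apply: le_trans (expR_ge1Dx _); lra.
apply: le_trans (ler_sum _ (fun i _ => tangent i)).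
have -> : \sum_i w i * (expR (- mu) * (1 - phi i + mu)) =
    expR (- mu) * ((1 + mu) * \sum_i w i - \sum_i w i * phi i).
  by rewrite mulr_sumr -sumrB mulr_sumr; apply: eq_bigr => i _; ring.
by rewrite w_sum1 mulr1 -/mu addrK mulr1.
Qed.

End Binomial.

Section BalancedMass.
Variable R : realType.
Implicit Types e : R.

Definition balanced_mass e (h N : nat) : R :=
  two_level_mass ((1 + e) / 2 / h%:R) ((1 - e) / 2 / h%:R) N h h.

Definition mass_exponent e (N M : R) : R := (1 + e ^+ 2) * N ^+ 2 / (2 * M).

Definition mass_error (N M : R) : R := N / M + 4 * N ^+ 3 / M ^+ 2.

Lemma balanced_mass_binomial e h N : (0 < h)%N ->
  balanced_mass e h N =
  \sum_(k < N.+1) binomial_pmf ((1 + e) / 2) N k * (ffact_ratio R h k * ffact_ratio R h (N - k)).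
Proof.
move=> h_gt0; have h_neq0 : (h%:R : R) != 0 by rewrite pnatr_eq0 -lt0n.
apply: eq_bigr => k _; rewrite /binomial_pmf /ffact_ratio.
rewrite -[in LHS](mulr_natr _ 'C(N, k)) -[in RHS](mulr_natr _ 'C(N, k)).
have -> : 1 - (1 + e) / 2 = (1 - e) / 2 by field.
rewrite !expr_div_n.
by field; rewrite !expf_neq0 // pnatr_eq0.
Qed.

(* The difference is [2 (K - N (1 + e) / 2)^2 / M]: the right-hand side is the tangent of the
   concave left-hand side at the binomial mean. *)
Lemma concave_exponent_le_tangent (K N e M : R) : 0 < M ->
  - (K * (K - 1)) / M - (N - K) * (N - K - 1) / M <=
  N / M - N ^+ 2 / (2 * M) + e * N ^+ 2 / M + e ^+ 2 * N ^+ 2 / (2 * M) - 2 * e * N / M * K.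
Proof.
move=> M_gt0; rewrite -subr_ge0.
have -> : N / M - N ^+ 2 / (2 * M) + e * N ^+ 2 / M + e ^+ 2 * N ^+ 2 / (2 * M)
    - 2 * e * N / M * K - (- (K * (K - 1)) / M - (N - K) * (N - K - 1) / M)
    = 2 * (K - N * (1 + e) / 2) ^+ 2 / M.
  by field; rewrite gt_eqF.
by apply: divr_ge0; [rewrite mulr_ge0 // sqr_ge0 | exact: ltW].
Qed.

Lemma tangent_exponent_le (N e M : R) : 0 < M -> 0 <= N -> 0 <= e <= 1 ->
  N / M - N ^+ 2 / (2 * M) + e * N ^+ 2 / M + e ^+ 2 * N ^+ 2 / (2 * M)
    - (1 + e) / 2 * (2 * e * N / M) / (1 + 2 * e * N / M) * N
  <= - mass_exponent e N M + mass_error N M.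
Proof.
move=> M_gt0 N_ge0 /andP[e_ge0 e_le1]; set l := 2 * e * N / M.
have l_ge0 : 0 <= l by apply: divr_ge0; rewrite ?(ltW M_gt0) ?mulr_ge0.
have p_ge0 : 0 <= (1 + e) / 2 by lra.
have quad_le_frac : (1 + e) / 2 * l - (1 + e) / 2 * l ^+ 2 <= (1 + e) / 2 * l / (1 + l).
  rewrite ler_pdivlMr; last by lra.
  have := mulr_ge0 p_ge0 (exprn_ge0 3 l_ge0).
  by rewrite !exprS expr0; nra.
apply: le_trans (_ : _ <= N / M - N ^+ 2 / (2 * M) + e * N ^+ 2 / M + e ^+ 2 * N ^+ 2 / (2 * M)
    - ((1 + e) / 2 * l - (1 + e) / 2 * l ^+ 2) * N) _.
  by rewrite lerD2l lerN2 ler_wpM2r.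
rewrite -subr_ge0 /mass_exponent /mass_error.
have -> : - ((1 + e ^+ 2) * N ^+ 2 / (2 * M)) + (N / M + 4 * N ^+ 3 / M ^+ 2) -
    (N / M - N ^+ 2 / (2 * M) + e * N ^+ 2 / M + e ^+ 2 * N ^+ 2 / (2 * M)
     - ((1 + e) / 2 * l - (1 + e) / 2 * l ^+ 2) * N)
    = N ^+ 3 / M ^+ 2 * (4 - 2 * (1 + e) * e ^+ 2).
  by rewrite /l; field; rewrite gt_eqF.
apply: mulr_ge0; first by apply: divr_ge0; apply: exprn_ge0 => //; exact: ltW.
have e2_le1 : e ^+ 2 <= 1 by rewrite expr2; nra.
have : (1 + e) * e ^+ 2 <= 2 * 1 by rewrite ler_pM ?sqr_ge0 //; lra.
lra.
Qed.

Lemma balanced_mass_le e h N : (0 < h)%N -> 0 <= e <= 1 ->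
  balanced_mass e h N <=
  expR (- mass_exponent e N%:R (2 * h%:R) + mass_error N%:R (2 * h%:R)).
Proof.
move=> h_gt0 e_bounds; have /andP[e_ge0 e_le1] := e_bounds.
rewrite balanced_mass_binomial //.
have M_gt0 : (0 : R) < 2 * h%:R by rewrite mulr_gt0 // ltr0n.
set M := 2 * h%:R; set p := (1 + e) / 2; set l := 2 * e * N%:R / M.
have p_bounds : 0 <= p <= 1 by rewrite /p; lra.
have l_ge0 : 0 <= l by apply: divr_ge0; rewrite ?(ltW M_gt0) ?mulr_ge0.
set c := N%:R / M - N%:R ^+ 2 / (2 * M) + e * N%:R ^+ 2 / M + e ^+ 2 * N%:R ^+ 2 / (2 * M).
apply: le_trans (_ : _ <= \sum_(k < N.+1) binomial_pmf p N k * (expR c * expR (- l) ^+ k)) _.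
  apply: ler_sum => k _; rewrite ler_wpM2l ?binomial_pmf_ge0 //.
  apply: le_trans (ler_pM (ffact_ratio_ge0 _ _ _) (ffact_ratio_ge0 _ _ _)
    (ffact_ratio_le_expR R k h_gt0) (ffact_ratio_le_expR R (N - k) h_gt0)) _.
  have le_kN : (k <= N)%N by rewrite -ltnS.
  rewrite -expRM_natr -!expRD ler_expR natrB // [X in _ + X <= _]mulNr [X in _ <= _ + X]mulNr.
  exact: concave_exponent_le_tangent.
under eq_bigr do rewrite mulrCA.
rewrite -mulr_sumr binomial_pgf.
have pgf_le : 1 - p + p * expR (- l) <= expR (- (p * l / (1 + l))).
  apply: le_trans (expR_ge1Dx _).
  have expR_le_inv : expR (- l) <= (1 + l)^-1.
    by rewrite expRN lef_pV2 ?posrE ?expR_gt0 ?expR_ge1Dx //; lra.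
  apply: le_trans (_ : _ <= 1 - p + p * (1 + l)^-1) _.
    by rewrite lerD2l ler_wpM2l //; lra.
  have -> : 1 - p + p * (1 + l)^-1 = 1 + - (p * l / (1 + l)) by field; lra.
  exact: lexx.
apply: le_trans (_ : _ <= expR c * expR (- (p * l / (1 + l))) ^+ N) _.
  rewrite ler_wpM2l ?expR_ge0 // lerXn2r ?nnegrE ?expR_ge0 //.
  by rewrite addr_ge0 ?mulr_ge0 ?expR_ge0 //; lra.
rewrite -expRM_natr -expRD ler_expR mulNr.
exact: tangent_exponent_le (ler0n _ _) e_bounds.
Qed.

Lemma binomial_second_moments (p : R) N :
  \sum_(k < N.+1) binomial_pmf p N k * (k%:R ^+ 2 + (N%:R - k%:R) ^+ 2) =
  2 * (N%:R * (N%:R - 1) * p ^+ 2) + (2 - 2 * N%:R) * (N%:R * p) + N%:R ^+ 2.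
Proof.
have pred_natr (j : nat) : (j%:R * (j.-1)%:R : R) = j%:R * (j%:R - 1).
  by case: j => [|j]; rewrite ?mul0r //= -natr1 addrK.
transitivity (\sum_(k < N.+1) (2 * (binomial_pmf p N k * (k%:R * (k.-1)%:R))
    + (2 - 2 * N%:R) * (binomial_pmf p N k * k%:R) + binomial_pmf p N k * N%:R ^+ 2)).
  by apply: eq_bigr => k _; rewrite pred_natr; ring.
rewrite !big_split /= -!mulr_sumr -mulr_suml binomial_factorial_moment2 binomial_mean.
by rewrite sum_binomial_pmf pred_natr; ring.
Qed.

Lemma ffact_ratio_pair_ge h N k : (0 < h)%N -> (N.*2 <= h)%N -> (k <= N)%N ->
  expR (- ((k%:R ^+ 2 + (N%:R - k%:R) ^+ 2) / (2 * h%:R) + N%:R ^+ 3 / h%:R ^+ 2))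
  <= ffact_ratio R h k * ffact_ratio R h (N - k).
Proof.
move=> h_gt0 le_2N_h le_kN; have h_pos : (0 : R) < h%:R by rewrite ltr0n.
apply: le_trans (ler_pM (expR_ge0 _) (expR_ge0 _)
  (ffact_ratio_ge_expR R (_ : (k.*2 <= h)%N)) (ffact_ratio_ge_expR R (_ : ((N - k).*2 <= h)%N)));
  [|lia|lia].
rewrite -expRD ler_expR natrB // -subr_ge0.
have K_ge0 : (0 : R) <= k%:R by rewrite ler0n.
have K_le : (k%:R : R) <= N%:R by rewrite ler_nat.
set K := k%:R; set H := h%:R.
have -> : - (K ^+ 2 / (2 * H) + K ^+ 3 / H ^+ 2) +
    - ((N%:R - K) ^+ 2 / (2 * H) + (N%:R - K) ^+ 3 / H ^+ 2) -
    - ((K ^+ 2 + (N%:R - K) ^+ 2) / (2 * H) + N%:R ^+ 3 / H ^+ 2)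
    = 3 * N%:R * K * (N%:R - K) / H ^+ 2.
  by field; rewrite gt_eqF.
apply: divr_ge0; last by apply: exprn_ge0; exact: ltW.
by apply: mulr_ge0; [apply: mulr_ge0; [apply: mulr_ge0|] | rewrite subr_ge0].
Qed.

Lemma balanced_mass_ge e h N : (0 < h)%N -> (N.*2 <= h)%N -> 0 <= e <= 1 ->
  expR (- mass_exponent e N%:R (2 * h%:R) - mass_error N%:R (2 * h%:R))
  <= balanced_mass e h N.
Proof.
move=> h_gt0 le_2N_h e_bounds.
have H_pos : (0 : R) < h%:R by rewrite ltr0n.
rewrite balanced_mass_binomial //; set p := (1 + e) / 2.
have p_bounds : 0 <= p <= 1 by rewrite /p; lra.
pose w (k : 'I_N.+1) := binomial_pmf p N k.
pose phi (k : 'I_N.+1) :=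
  (k%:R ^+ 2 + (N%:R - k%:R) ^+ 2) / (2 * h%:R) + N%:R ^+ 3 / h%:R ^+ 2 :> R.
apply: le_trans (_ : _ <= \sum_k w k * expR (- phi k)) _; last first.
  apply: ler_sum => k _; rewrite ler_wpM2l ?binomial_pmf_ge0 //.
  by apply: ffact_ratio_pair_ge; rewrite // -ltnS.
apply: (le_trans _ (@expR_jensen _ _ w phi (fun k : 'I_N.+1 => binomial_pmf_ge0 N k p_bounds)
  (sum_binomial_pmf p N))).
rewrite ler_expR.
have -> : \sum_k w k * phi k =
    (\sum_(k < N.+1) binomial_pmf p N k * (k%:R ^+ 2 + (N%:R - k%:R) ^+ 2)) / (2 * h%:R)
    + N%:R ^+ 3 / h%:R ^+ 2 * \sum_(k < N.+1) binomial_pmf p N k.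
  by rewrite mulr_sumr mulr_suml -big_split /=; apply: eq_bigr => k _; rewrite /w /phi; ring.
rewrite binomial_second_moments sum_binomial_pmf mulr1 -opprD lerN2 -subr_ge0.
rewrite /mass_exponent /mass_error /p; set H := h%:R.
have -> : (1 + e ^+ 2) * N%:R ^+ 2 / (2 * (2 * H)) + (N%:R / (2 * H) + 4 * N%:R ^+ 3 / (2 * H) ^+ 2)
    - ((2 * (N%:R * (N%:R - 1) * ((1 + e) / 2) ^+ 2) + (2 - 2 * N%:R) * (N%:R * ((1 + e) / 2))
       + N%:R ^+ 2) / (2 * H) + N%:R ^+ 3 / H ^+ 2)
    = N%:R * (1 + e ^+ 2) / (4 * H).
  by field; rewrite gt_eqF.
by rewrite divr_ge0 ?mulr_ge0 ?ler0n ?addr_ge0 ?sqr_ge0 //; lra.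
Qed.

End BalancedMass.

Section Asymptotics.
Variable R : realType.

Lemma ln_balanced_mass (e : R) h N : (0 < h)%N -> (N.*2 <= h)%N -> 0 <= e <= 1 ->
  0 < balanced_mass e h N /\
  `|ln (balanced_mass e h N) + mass_exponent e N%:R (2 * h%:R)| <= mass_error N%:R (2 * h%:R).
Proof.
move=> h_gt0 le_2N_h e_bounds.
have mass_ge := balanced_mass_ge h_gt0 le_2N_h e_bounds.
have mass_le := balanced_mass_le N h_gt0 e_bounds.
have mass_gt0 := lt_le_trans (expR_gt0 _) mass_ge.
split => //; rewrite ler_norml.
have ln_ge := mass_ge; rewrite -[X in _ <= X]lnK ?posrE // ler_expR in ln_ge.
have ln_le := mass_le; rewrite -[X in X <= _]lnK ?posrE // ler_expR in ln_le.
by apply/andP; split; lra.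
Qed.

Lemma inj_mass_qom (e : R) m (omega : {set 'I_m}) N :
  ~~ odd m -> #|omega| = (m %/ 2)%N -> inj_mass N (qom e omega) = balanced_mass e m./2 N.
Proof.
move=> m_even card_omega.
have m_double : (m%:R : R) = 2 * (m./2)%:R.
  by rewrite -natrM mul2n -[in LHS](odd_double_half m) (negbTE m_even).
have card_compl : #|~: omega| = m./2.
  by rewrite cardsCs setCK card_ord card_omega divn2; lia.
rewrite (@inj_mass_two_level _ _ ((1 + e) / 2 / (m./2)%:R) ((1 - e) / 2 / (m./2)%:R)
  _ omega (~: omega)).
- by rewrite card_compl card_omega divn2.
- by rewrite -setI_eq0 setICr.
by move=> j; rewrite /qom in_setC m_double invfM !mulrA; case: (j \in omega).
Qed.

Lemma inj_mass_unifp m (omega : {set 'I_m}) N :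
  inj_mass N (@unifp R m) = inj_mass N (qom 0 omega).
Proof. by apply: eq_inj_mass => j; rewrite /qom /unifp addr0 subr0; case: ifP. Qed.

Lemma ln_probA_le (eps : R) m (omega : {set 'I_m}) N n :
  (0 < m)%N -> ~~ odd m -> #|omega| = (m %/ 2)%N -> (4 * N <= m)%N -> 0 <= eps <= 1 ->
  `|ln (probA eps omega N n) + (1 + eps ^+ 2 / 2) * (N%:R ^+ 2 / m%:R)|
    <= 2 * mass_error N%:R m%:R.
Proof.
move=> m_gt0 m_even card_omega le_4N_m eps_bounds.
have h_gt0 : (0 < m./2)%N by lia.
have le_2N_h : (N.*2 <= m./2)%N by lia.
have m_double : (m%:R : R) = 2 * (m./2)%:R.
  by rewrite -natrM mul2n -[in LHS](odd_double_half m) (negbTE m_even).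
have zero_bounds : 0 <= (0 : R) <= 1 by rewrite lexx ler01.
have [unif_gt0 unif_ln] := ln_balanced_mass h_gt0 le_2N_h zero_bounds.
have [qom_gt0 qom_ln] := ln_balanced_mass h_gt0 le_2N_h eps_bounds.
rewrite -m_double in unif_ln qom_ln.
rewrite probA_inj_mass // (inj_mass_unifp omega) !inj_mass_qom // lnM ?posrE //.
have -> : (1 + eps ^+ 2 / 2) * (N%:R ^+ 2 / m%:R) =
    mass_exponent 0 N%:R m%:R + mass_exponent eps N%:R m%:R.
  by rewrite /mass_exponent; field; rewrite pnatr_eq0 -lt0n.
rewrite addrACA -[2]/(1 + 1) mulrDl mul1r.
by apply: le_trans (ler_normD _ _) _; exact: lerD.
Qed.

Lemma absorb_relative_error (D k eta C : R) :
  0 <= k -> 0 <= eta -> 0 <= C -> `|D| <= C + k * eta ->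
  exists theta, `|theta| <= eta /\ `|D + k * theta| <= C.
Proof.
move=> k_ge0 eta_ge0 C_ge0 D_bound.
have [D_le_C|C_lt_D] := lerP `|D| C; first by exists 0; rewrite normr0 mulr0 addr0.
have k_gt0 : 0 < k.
  rewrite lt_neqAle k_ge0 andbT; apply: contraTneq D_bound => <-.
  by rewrite mul0r addr0 -ltNge.
have theta_le (x : R) : `|x| <= k * eta -> `|x / k| <= eta.
  by rewrite normrM normfV (gtr0_norm k_gt0) ler_pdivrMr // mulrC.
move: D_bound; rewrite ler_norml => /andP[D_ge D_le].
move: C_lt_D; rewrite ltr_normr => /orP[C_lt_D|C_lt_ND].
  exists ((C - D) / k); split; first by apply: theta_le; rewrite ler_norml; apply/andP; split; lra.
  by rewrite mulrCA divff ?gt_eqF // mulr1 addrC subrK ger0_norm.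
exists ((- C - D) / k); split; first by apply: theta_le; rewrite ler_norml; apply/andP; split; lra.
by rewrite mulrCA divff ?gt_eqF // mulr1 addrC subrK normrN ger0_norm.
Qed.

Lemma mass_error_le (N m d : R) : 0 < m -> 0 <= N -> N <= d * m ->
  mass_error N m <= d + 4 * d * (N ^+ 2 / m).
Proof.
move=> m_gt0 N_ge0 N_le; have r_le : N / m <= d by rewrite ler_pdivrMr.
have -> : mass_error N m = N / m + 4 * (N ^+ 2 / m) * (N / m).
  by rewrite /mass_error; field; rewrite gt_eqF.
by rewrite lerD // [4 * d * _]mulrAC ler_wpM2l // mulr_ge0 // divr_ge0 ?exprn_ge0 // ltW.
Qed.

Lemma ln_probA_near (eps d : R) m (omega : {set 'I_m}) N n :
  0 < d <= 1 / 4 -> 0 <= eps <= 1 -> ~~ odd m -> #|omega| = (m %/ 2)%N ->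
  (0 < N)%N -> N%:R <= d * m%:R ->
  `|ln (probA eps omega N n) + (1 + eps ^+ 2 / 2) * (N%:R ^+ 2 / m%:R)|
    <= 1 / 2 + 8 * d * (N%:R ^+ 2 / m%:R).
Proof.
move=> /andP[d_gt0 d_le] eps_bounds m_even card_omega N_gt0 N_le.
have m_pos : (0 : R) < m%:R.
  by rewrite -(pmulr_rgt0 _ d_gt0); apply: lt_le_trans N_le; rewrite ltr0n.
have le_4N_m : (4 * N <= m)%N.
  by rewrite -(ler_nat R) natrM; have := ler_wpM2r (ltW m_pos) d_le; lra.
have m_gt0 : (0 < m)%N by rewrite -(ltr0n R).
apply: le_trans (ln_probA_le n m_gt0 m_even card_omega le_4N_m eps_bounds) _.
have := mass_error_le m_pos (ler0n _ _) N_le; lra.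
Qed.

End Asymptotics.

Theorem lemma2 (R : realType) (eps : R) (N n : nat -> nat) :
  0 < eps <= 1 ->
  (forall m : nat, ~~ odd m -> (0 < N m)%N /\ (0 < n m)%N) ->
  (forall eta : R, 0 < eta -> exists M : nat, forall m : nat,
      (M <= m)%N -> ~~ odd m -> (N m)%:R <= eta * m%:R) ->
  (forall eta : R, 0 < eta -> exists M : nat, forall m : nat,
      (M <= m)%N -> ~~ odd m -> (n m)%:R <= eta * m%:R) ->
  exists C : R, forall eta : R, 0 < eta -> exists M : nat, forall m : nat,
    (M <= m)%N -> ~~ odd m ->
    forall omega : {set 'I_m}, #|omega| = (m %/ 2)%N ->
    exists theta : R, `|theta| <= eta /\
      `| ln (probA eps omega (N m) (n m))
         + (1 + eps ^+ 2 / 2) * ((N m)%:R ^+ 2 / m%:R) * (1 + theta) | <= C.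
Proof.
move=> /andP[eps_gt0 eps_le1] N_pos N_small _; exists 1 => eta eta_gt0.
pose d := Num.min (eta / 8) (1 / 4).
have d_bounds : 0 < d <= 1 / 4 by rewrite lt_min ge_min lexx orbT; apply/andP; split; lra.
have d_le_eta : d <= eta / 8 by rewrite ge_min lexx.
have [M N_le] := N_small d (proj1 (andP d_bounds)).
exists M => m le_Mm m_even omega card_omega.
have eps_bounds : 0 <= eps <= 1 by rewrite (ltW eps_gt0) eps_le1.
have := ln_probA_near (n m) d_bounds eps_bounds m_even card_omega
  (N_pos m m_even).1 (N_le m le_Mm m_even).
set c := 1 + eps ^+ 2 / 2; set L := (N m)%:R ^+ 2 / m%:R => ln_le.
have L_ge0 : 0 <= L by rewrite divr_ge0 ?exprn_ge0 ?ler0n.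
have c_ge1 : 1 <= c by rewrite /c; have := sqr_ge0 eps; lra.
have dL_le : d * L <= eta / 8 * L by rewrite ler_wpM2r.
have cL_ge : L * eta <= c * (L * eta) by rewrite ler_peMl // mulr_ge0 // ltW.
have [|theta [theta_le D_le]] := @absorb_relative_error R
    (ln (probA eps omega (N m) (n m)) + c * L) (c * L) eta 1
    (mulr_ge0 (le_trans ler01 c_ge1) L_ge0) (ltW eta_gt0) ler01.
  by apply: le_trans ln_le _; rewrite -mulrA; lra.
by exists theta; rewrite mulrDr mulr1 addrA.
Qed.
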